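(* Every finite quasigroup $\langle A;\cdot\rangle$ which is an Abelian algebra is a Hamiltonian algebra.
   Context: A quasigroup is here the algebra $\langle A;\cdot\rangle$ with one binary operation such that for all $a,b\in A$ there are unique $x,y\in A$ with $x\cdot a=b$ and $a\cdot y=b$; its subalgebras are the nonempty subsets closed under $\cdot$. A polynomial operation of an algebra is an operation obtained from a term by substituting elements of the algebra for some of its variables. An algebra is called Abelian if for every polynomial operation $t(x,y_1,\ldots,y_n)$ and all elements $u,v,c_1,\ldots,c_n,d_1,\ldots,d_n$ of the algebra, $t(u,c_1,\ldots,c_n)=t(u,d_1,\ldots,d_n)$ implies $t(v,c_1,\ldots,c_n)=t(v,d_1,\ldots,d_n)$. An algebra is called Hamiltonian if the universe of every subalgebra is an equivalence class (block) of some congruence of the algebra. *)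

From mathcomp Require Import all_boot.
Set Implicit Arguments. Unset Strict Implicit. Unset Printing Implicit Defensive.

Definition is_quasigroup (A : Type) (op : A -> A -> A) : Prop :=
  forall a b : A, (exists! x, op x a = b) /\ (exists! y, op a y = b).

(* Terms in the language of one binary operation, with variables indexed by
   nat and with constants from A (so their evaluations are exactly the
   polynomial operations). *)
Inductive pterm (A : Type) : Type :=
| PVar of nat
| PCst of A
| POp of pterm A & pterm A.

Fixpoint peval (A : Type) (op : A -> A -> A) (e : nat -> A) (t : pterm A) : A :=
  match t with
  | PVar i => e i
  | PCst a => a
  | POp t1 t2 => op (peval op e t1) (peval op e t2)
  end.

Definition scons (A : Type) (x : A) (c : nat -> A) : nat -> A :=
  fun i => match i with 0 => x | i'.+1 => c i' end.

Definition abelian_alg (A : Type) (op : A -> A -> A) : Prop :=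
  forall (t : pterm A) (u v : A) (c d : nat -> A),
    peval op (scons u c) t = peval op (scons u d) t ->
    peval op (scons v c) t = peval op (scons v d) t.

Definition is_subalgebra (A : finType) (op : A -> A -> A) (S : {set A}) : Prop :=
  S != set0 /\ forall x y, x \in S -> y \in S -> op x y \in S.

Definition is_congruence (A : Type) (op : A -> A -> A) (R : A -> A -> Prop) : Prop :=
  (forall x, R x x) /\ (forall x y, R x y -> R y x) /\
  (forall x y z, R x y -> R y z -> R x z) /\
  (forall x x' y y', R x x' -> R y y' -> R (op x y) (op x' y')).

Definition hamiltonian_alg (A : finType) (op : A -> A -> A) : Prop :=
  forall S : {set A}, is_subalgebra op S ->
    exists R : A -> A -> Prop, is_congruence op R /\
      exists a : A, forall x : A, x \in S <-> R a x.

From mathcomp Require Import all_boot all_fingroup.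
From mathcomp Require Import cyclic.

Set Implicit Arguments.
Unset Strict Implicit.
Unset Printing Implicit Defensive.

(* Let S be a subalgebra containing s0. Two elements are related when no unary
   polynomial separates them with respect to membership in S; this is a
   congruence in any algebra, and S is contained in the block of s0 as soon as
   every unary polynomial p with p(s1) in S, s1 in S, also maps each s2 in S
   into S. In a finite quasigroup the divisions are term operations (powers of
   the translation permutations), hence so is the Mal'cev term
   m(a, b, c) = (a / (b \ b)) (b \ c), with m(a, a, c) = c and m(a, b, b) = a.
   Writing p(x) = T(x, consts), apply the term condition to
   m(T(x, w), T(s1, w), p(s1)) at x = s1 and x = s2, once with w the genuine
   constants and once with all constants replaced by s1: this gives p(s2) as a
   value of a polynomial whose inputs all lie in S. *)

Lemma quasigroup_linj (A : Type) (op : A -> A -> A) :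
  is_quasigroup op -> forall a, injective (op a).
Proof.
move=> qA a y1 y2 eq_y; have [_ [y [_ uniq_y]]] := qA a (op a y1).
by rewrite -(uniq_y y1 erefl) (uniq_y y2 (esym eq_y)).
Qed.

Lemma quasigroup_rinj (A : Type) (op : A -> A -> A) :
  is_quasigroup op -> forall b, injective (op^~ b).
Proof.
move=> qA b x1 x2 eq_x; have [[x [_ uniq_x]] _] := qA b (op x1 b).
by rewrite -(uniq_x x1 erefl) (uniq_x x2 (esym eq_x)).
Qed.

Lemma card_perm_gt0 (T : finType) : 0 < #|{perm T}|.
Proof. by apply/card_gt0P; exists 1%g. Qed.

Lemma iter_card_perm (T : finType) (f : T -> T) :
  injective f -> iter #|{perm T}| f =1 id.
Proof.
move=> inj_f x; have := permX (perm inj_f) x #|{perm T}|.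
rewrite -cardsT expg_cardG ?inE // perm1 => {2}->.
by apply: eq_iter => y; rewrite permE.
Qed.

Section PolynomialTerms.
Variables (A : Type) (op : A -> A -> A).

Fixpoint psubst (f : nat -> pterm A) (t : pterm A) : pterm A :=
  match t with
  | PVar i => f i
  | PCst a => PCst a
  | POp t1 t2 => POp (psubst f t1) (psubst f t2)
  end.

Definition psubst0 (a : A) : pterm A -> pterm A :=
  psubst (scons (PCst a) (fun i => PVar A i.+1)).

Lemma eq_peval (e e' : nat -> A) (t : pterm A) :
  e =1 e' -> peval op e t = peval op e' t.
Proof. by move=> eq_e; elim: t => //= t1 -> t2 ->. Qed.

Lemma peval_psubst (e : nat -> A) (f : nat -> pterm A) (t : pterm A) :
  peval op e (psubst f t) = peval op (fun i => peval op e (f i)) t.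
Proof. by elim: t => //= t1 -> t2 ->. Qed.

Lemma peval_psubst0 (a x : A) (w : nat -> A) (t : pterm A) :
  peval op (scons x w) (psubst0 a t) = peval op (scons a w) t.
Proof. by rewrite peval_psubst; apply: eq_peval; case. Qed.

(* The syntactic congruence of S: [peval op (fun _ => x) t] ranges over the
   values at x of all unary polynomials. *)
Definition poly_equiv (S : pred A) (x y : A) : Prop :=
  forall t : pterm A, S (peval op (fun _ => x) t) = S (peval op (fun _ => y) t).

Lemma poly_equiv_congruence (S : pred A) : is_congruence op (poly_equiv S).
Proof.
have opl x x' y : poly_equiv S x x' -> poly_equiv S (op x y) (op x' y).
  by move=> eq_x t; have := eq_x (psubst (fun=> POp (PVar A 0) (PCst y)) t);
    rewrite !peval_psubst.
have opr x y y' : poly_equiv S y y' -> poly_equiv S (op x y) (op x y').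
  by move=> eq_y t; have := eq_y (psubst (fun=> POp (PCst x) (PVar A 0)) t);
    rewrite !peval_psubst.
split; first by [].
split; first by move=> x y eq_xy t; rewrite eq_xy.
split; first by move=> x y z eq_xy eq_yz t; rewrite eq_xy eq_yz.
by move=> x x' y y' /(opl _ _ y) eq_x /(opr x') eq_y t; rewrite eq_x eq_y.
Qed.

End PolynomialTerms.

Section ConstantAbstraction.
Variables (A : countType) (op : A -> A -> A).

Fixpoint pabstract (t : pterm A) : pterm A :=
  match t with
  | PVar _ => PVar A 0
  | PCst a => PVar A (pickle a).+1
  | POp t1 t2 => POp (pabstract t1) (pabstract t2)
  end.

Definition unpickle_env (d : A) (i : nat) : A := odflt d (unpickle i).

Lemma peval_pabstract (d x : A) (t : pterm A) :
  peval op (scons x (unpickle_env d)) (pabstract t) = peval op (fun _ => x) t.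
Proof. by elim: t => //= [a | t1 -> t2 ->] //; rewrite /unpickle_env pickleK. Qed.

Lemma pabstract_closed (S : pred A) (e : nat -> A) (t : pterm A) :
  (forall x y, S x -> S y -> S (op x y)) -> (forall i, S (e i)) ->
  S (peval op e (pabstract t)).
Proof. by move=> S_op S_e; elim: t => //= t1 S_t1 t2 S_t2; apply: S_op. Qed.

End ConstantAbstraction.

Section FiniteQuasigroup.
Variables (A : finType) (op : A -> A -> A).
Hypothesis op_linj : forall a, injective (op a).
Hypothesis op_rinj : forall b, injective (op^~ b).

Local Notation inv_exp := #|{perm A}|.-1.

Definition ldiv (a b : A) : A := iter inv_exp (op a) b.
Definition rdiv (a b : A) : A := iter inv_exp (op^~ b) a.

Lemma mul_ldiv a b : op a (ldiv a b) = b.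
Proof. by rewrite /ldiv -iterS prednK ?card_perm_gt0 ?iter_card_perm. Qed.

Lemma mul_rdiv a b : op (rdiv a b) b = a.
Proof.
by rewrite /rdiv -(iterS _ (op^~ b)) prednK ?card_perm_gt0 ?iter_card_perm.
Qed.

Lemma rdiv_mul a b : rdiv (op a b) b = a.
Proof.
by rewrite /rdiv -(iterSr _ (op^~ b)) prednK ?card_perm_gt0 ?iter_card_perm.
Qed.

Definition malcev (a b c : A) : A := op (rdiv a (ldiv b b)) (ldiv b c).

Lemma malcev_diag_l a c : malcev a a c = c.
Proof. by rewrite /malcev -{1}[a](mul_ldiv a a) rdiv_mul mul_ldiv. Qed.

Lemma malcev_diag_r a b : malcev a b b = a.
Proof. by rewrite /malcev mul_rdiv. Qed.

Lemma malcev_closed (S : pred A) a b c :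
  (forall x y, S x -> S y -> S (op x y)) -> S a -> S b -> S c -> S (malcev a b c).
Proof.
move=> S_op Sa Sb Sc.
have S_ldiv x z : S x -> S z -> S (ldiv x z).
  by move=> Sx Sz; apply: (iter_in (S := S)) => // u; apply: S_op.
have S_rdiv x z : S x -> S z -> S (rdiv x z).
  by move=> Sx Sz; apply: (iter_in (S := S)) => // u /S_op; apply.
by apply: S_op; [apply: S_rdiv => //; apply: S_ldiv | apply: S_ldiv].
Qed.

Definition malcevT (ta tb tc : pterm A) : pterm A :=
  let ldivT (t1 t2 : pterm A) := iter inv_exp (POp t1) t2 in
  let rdivT (t1 t2 : pterm A) := iter inv_exp (fun u => POp u t2) t1 in
  POp (rdivT ta (ldivT tb tb)) (ldivT tb tc).

Lemma peval_malcevT e ta tb tc :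
  peval op e (malcevT ta tb tc)
  = malcev (peval op e ta) (peval op e tb) (peval op e tc).
Proof.
have peval_iterl t1 t2 n : peval op e (iter n (POp t1) t2)
    = iter n (op (peval op e t1)) (peval op e t2) by elim: n => //= n ->.
have peval_iterr t1 t2 n : peval op e (iter n (fun u => POp u t2) t1)
    = iter n (op^~ (peval op e t2)) (peval op e t1) by elim: n => //= n ->.
by rewrite /= peval_iterr !peval_iterl.
Qed.

Lemma abelian_unary_poly_mem (S : pred A) (t : pterm A) (s1 s2 : A) :
  abelian_alg op -> (forall x y, S x -> S y -> S (op x y)) -> S s1 -> S s2 ->
  S (peval op (fun _ => s1) t) -> S (peval op (fun _ => s2) t).
Proof.
move=> abA S_op S1 S2 S_y; set y := peval op _ t in S_y.
pose T := pabstract t; pose P := malcevT T (psubst0 s1 T) (PCst y).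
have peval_P x w : peval op (scons x w) P
    = malcev (peval op (scons x w) T) (peval op (scons s1 w) T) y.
  by rewrite peval_malcevT peval_psubst0.
have S_T x : S x -> S (peval op (scons x (fun _ => s1)) T).
  by move=> Sx; apply: pabstract_closed => // -[].
have := abA P s1 s2 (unpickle_env s1) (fun _ => s1).
rewrite !peval_P !malcev_diag_l !peval_pabstract malcev_diag_r => -> //.
by apply: malcev_closed => //; apply: S_T.
Qed.

End FiniteQuasigroup.

Theorem mainTheorem9 (A : finType) (op : A -> A -> A) :
  is_quasigroup op -> abelian_alg op -> hamiltonian_alg op.
Proof.
move=> qA abA S [/set0Pn[s0 S_s0] S_op].
have mem_poly t s1 s2 : s1 \in S -> s2 \in S ->
    peval op (fun _ => s1) t \in S -> peval op (fun _ => s2) t \in S.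
  exact: (abelian_unary_poly_mem (quasigroup_linj qA) (quasigroup_rinj qA)).
exists (poly_equiv op (mem S)); split; first exact: poly_equiv_congruence.
exists s0 => x; split=> [Sx t | /(_ (PVar A 0)) /= <- //].
by apply/idP/idP; apply: mem_poly.
Qed.
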